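(* Let $0\le b\le1$ and $0\le\alpha<1$, and let $r_0=r_0(\alpha)$ be the real root in $(0,1)$ of the equation \[2\big(1-\alpha+2(2-\alpha)(1-b)r\big)(1-r)^4=1-\alpha+4r+(1+\alpha)r^2.\] Let $\mathcal{F}$ be the class of functions $f\in\mathcal{A}_b$, $f(z)=z+\sum_{n\ge2}a_nz^n$, with $|a_n|\le n$ for all $n\ge3$. Then: (i) every $f\in\mathcal{F}$ satisfies $\left|\frac{zf''(z)}{f'(z)}\right|\le1-\alpha$ for $|z|\le r_0$; (ii) $r_0(\alpha)$ is the radius of convexity of order $\alpha$ of $\mathcal{F}$; (iii) $r_0(1/2)$ is the radius of uniform convexity of $\mathcal{F}$. All results are sharp: the function $f_0(z)=2z+2(1-b)z^2-\frac{z}{(1-z)^2}=z-2bz^2-\sum_{n\ge3}nz^n$ belongs to $\mathcal{F}$ and satisfies $\left|\frac{zf_0''(z)}{f_0'(z)}\right|=1-\alpha$ and $\operatorname{Re}\frac{zf_0''(z)}{f_0'(z)}=\alpha-1$ at $z=r_0$.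
   Context: $\mathbb{D}=\{z\in\mathbb{C}:|z|<1\}$. For $0\le b\le1$, $\mathcal{A}_b$ is the class of analytic functions $f$ on $\mathbb{D}$ of the form $f(z)=z+a_2z^2+a_3z^3+\cdots$ with $|a_2|=2b$. For a class $\mathcal{F}$ of analytic functions on $\mathbb{D}$ normalized by $f(0)=0$, $f'(0)=1$, and $0\le\alpha<1$, the radius of convexity of order $\alpha$ of $\mathcal{F}$ is the supremum of $r\in(0,1]$ such that every $f\in\mathcal{F}$ satisfies $f'(z)\ne0$ and $\operatorname{Re}\big(1+zf''(z)/f'(z)\big)>\alpha$ for $|z|<r$. The radius of uniform convexity of $\mathcal{F}$ is the supremum of $r\in(0,1]$ such that every $f\in\mathcal{F}$ satisfies $f'(z)\ne0$ and $\operatorname{Re}\big(1+zf''(z)/f'(z)\big)>\left|zf''(z)/f'(z)\right|$ for $|z|<r$. *)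

From Stdlib Require Import Reals.
From Coquelicot Require Import Coquelicot.
Open Scope R_scope.

Definition Cderiv (g : C -> C) (z l : C) : Prop :=
  @is_derive C_AbsRing C_NormedModule g z l.

Definition Csum (u : nat -> C) (l : C) : Prop :=
  @is_series C_AbsRing C_NormedModule u l.

Definition InFclass (b : R) (f f1 f2 : C -> C) : Prop :=
  exists a : nat -> C,
    a 0%nat = 0%C /\ a 1%nat = 1%C /\ Cmod (a 2%nat) = 2 * b /\
    (forall n : nat, (3 <= n)%nat -> Cmod (a n) <= INR n) /\
    (forall z : C, Cmod z < 1 ->
       Csum (fun n => (a n * z ^ n)%C) (f z) /\
       Cderiv f z (f1 z) /\ Cderiv f1 z (f2 z)).

Definition convex_order_radii (alpha : R) (P : (C -> C) -> (C -> C) -> (C -> C) -> Prop)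
  (r : R) : Prop :=
  0 < r <= 1 /\
  forall f f1 f2, P f f1 f2 -> forall z : C, Cmod z < r ->
    f1 z <> 0%C /\ Re (1 + z * f2 z / f1 z)%C > alpha.

Definition is_radius_convexity_order (alpha : R) P (rho : R) : Prop :=
  is_lub (convex_order_radii alpha P) rho.

Definition unif_convex_radii (P : (C -> C) -> (C -> C) -> (C -> C) -> Prop) (r : R) : Prop :=
  0 < r <= 1 /\
  forall f f1 f2, P f f1 f2 -> forall z : C, Cmod z < r ->
    f1 z <> 0%C /\ Re (1 + z * f2 z / f1 z)%C > Cmod (z * f2 z / f1 z)%C.

Definition is_radius_unif_convexity P (rho : R) : Prop :=
  is_lub (unif_convex_radii P) rho.

Definition r0_eq (b alpha r : R) : Prop :=
  2 * (1 - alpha + 2 * (2 - alpha) * (1 - b) * r) * (1 - r) ^ 4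
  = 1 - alpha + 4 * r + (1 + alpha) * r ^ 2.

Definition f0 (b : R) (z : C) : C :=
  (2 * z + 2 * RtoC (1 - b) * z ^ 2 - z / (1 - z) ^ 2)%C.

From Stdlib Require Import Reals Lra Lia Psatz ClassicalEpsilon.
From Coquelicot Require Import Coquelicot.
Open Scope R_scope.

(* If |a_2| = 2b and |a_n| <= n for n >= 3, then from n = 2 on every coefficient of f is
   dominated in modulus by the corresponding coefficient of f0, and those are all nonpositive.
   Summing the power series on |z| <= r therefore gives |f'(z)| >= f0'(r) and
   |f''(z)| <= -f0''(r), so |z f''(z) / f'(z)| <= r |f0''(r)| / f0'(r), with equality for f0
   at z = r.  After clearing the factor (1-r)^4, the equation defining r0 says exactly
   (1 - alpha) f0'(r0) + r0 f0''(r0) = 0: the bound equals 1 - alpha at r0, which gives (i)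
   and the lower bounds for both radii.  Past r0 this combination turns negative while f0'
   stays positive nearby, so at real points just beyond r0 the ratio z f0''/f0' is a real
   number below alpha - 1, which violates convexity of order alpha and, for alpha = 1/2,
   uniform convexity. *)

Section SeriesFacts.
Context {K : AbsRing} {V : NormedModule K}.

Lemma is_series_norm_le (u : nat -> V) (v : nat -> R) (l : V) (L : R) :
  (forall n, norm (u n) <= v n) -> is_series u l -> is_series v L -> norm l <= L.
Proof.
  intros Huv Hu Hv. change (Rbar_le (norm l) L).
  apply (is_lim_seq_le (fun N => norm (sum_n u N)) (sum_n v)); [| |exact Hv].
  - intros N. eapply Rle_trans; [apply norm_sum_n_m|]. apply sum_n_m_le. exact Huv.
  - eapply filterlim_comp; [exact Hu|apply filterlim_norm].
Qed.

Lemma is_series_eventually_ext (u v : nat -> V) (N : nat) (l : V) :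
  (forall n, (N < n)%nat -> u n = v n) -> is_series u l ->
  is_series v (plus (minus l (sum_n u N)) (sum_n v N)).
Proof.
  intros Huv Hu. apply (is_series_decr_n v (S N)); [lia|]. simpl pred.
  rewrite <- plus_assoc, (@plus_opp_r (NormedModule.AbelianGroup K V)), plus_zero_r.
  apply is_series_ext with (fun k => u (S N + k)%nat); [intros k; apply Huv; lia|].
  apply is_series_incr_n; [lia|]. simpl pred.
  unfold minus.
  rewrite <- plus_assoc, (@plus_opp_l (NormedModule.AbelianGroup K V)), plus_zero_r.
  exact Hu.
Qed.

Lemma is_series_of_sum_bound (u : nat -> V) (l : V) (e : nat -> R) :
  (forall N, norm (minus (sum_n u N) l) <= e N) -> is_lim_seq e 0 -> is_series u l.
Proof.
  intros Hb He. apply filterlim_locally_ball_norm. intros eps.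
  generalize (proj2 (is_lim_seq_spec e 0) He eps). apply filter_imp.
  intros N HN. unfold ball_norm. rewrite Rminus_0_r in HN.
  eapply Rle_lt_trans; [apply Hb|]. eapply Rle_lt_trans; [apply Rle_abs|exact HN].
Qed.

End SeriesFacts.

Lemma is_series_RtoC (u : nat -> R) (l : R) :
  is_series u l -> is_series (fun n => RtoC (u n)) (RtoC l).
Proof.
  assert (Hsum : forall N, sum_n (fun n => RtoC (u n)) N = RtoC (sum_n u N)).
  { induction N; [rewrite !sum_O; reflexivity|].
    rewrite !sum_Sn, IHN. symmetry. apply RtoC_plus. }
  intros Hu. apply filterlim_locally_ball_norm. intros eps.
  generalize (proj1 (filterlim_locally_ball_norm _ _) Hu eps).
  apply filter_imp. intros N. unfold ball_norm.
  change (Rabs (sum_n u N - l) < eps ->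
          Cmod (sum_n (fun n => RtoC (u n)) N - RtoC l) < eps).
  rewrite Hsum.
  rewrite <- RtoC_minus, Cmod_R. exact (fun h => h).
Qed.

Definition CSeries (u : nat -> C) : C :=
  epsilon (inhabits (RtoC 0)) (fun l : C => is_series u l).

Lemma CSeries_correct (u : nat -> C) : ex_series u -> is_series u (CSeries u).
Proof. intros [l Hl]. unfold CSeries. apply epsilon_spec. exists l. exact Hl. Qed.

Lemma is_CSeries_unique (u : nat -> C) (l : C) : is_series u l -> CSeries u = l.
Proof.
  intros Hl. exact (filterlim_locally_unique _ _ _ (CSeries_correct u (ex_intro _ l Hl)) Hl).
Qed.

Definition CPSeries (c : nat -> C) (z : C) : C := CSeries (fun n => c n * z ^ n)%C.

Definition CPS_derive (c : nat -> C) (n : nat) : C := (INR (S n) * c (S n))%C.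

Lemma CV_radius_ones : CV_radius (fun _ => 1) = 1.
Proof.
  rewrite (CV_radius_finite_DAlembert _ 1); [simpl; now rewrite Rinv_1 | intros; lra | lra |].
  apply is_lim_seq_ext with (fun _ => 1); [|apply is_lim_seq_const].
  intros n. unfold Rdiv. now rewrite Rinv_1, Rmult_1_l, Rabs_R1.
Qed.

Lemma ex_series_pow_geom (k : nat) (s : R) :
  0 <= s < 1 -> ex_series (fun n => (INR n + 1) ^ k * s ^ n).
Proof.
  intros Hs.
  (* [Nat.iter j PS_derive 1] has coefficients [(n+1)(n+2)...(n+j)] >= [(n+1)^j]. *)
  assert (Hg : forall j n, (INR n + 1) ^ j <= Nat.iter j PS_derive (fun _ => 1) n).
  { induction j as [|j IHj]; intros n; [simpl; lra|].
    change (Nat.iter (S j) PS_derive (fun _ => 1))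
      with (PS_derive (Nat.iter j PS_derive (fun _ => 1))).
    simpl pow. unfold PS_derive at 1. rewrite S_INR. pose proof (pos_INR n).
    apply Rmult_le_compat_l; [lra|]. eapply Rle_trans; [|apply IHj].
    apply pow_incr. rewrite S_INR. lra. }
  assert (Hr : forall j, CV_radius (Nat.iter j PS_derive (fun _ => 1)) = 1).
  { induction j as [|j IHj]; [apply CV_radius_ones|].
    change (CV_radius (PS_derive (Nat.iter j PS_derive (fun _ => 1))) = 1).
    rewrite CV_radius_derive. exact IHj. }
  set (g := Nat.iter k PS_derive (fun _ => 1)).
  apply (ex_series_le (V := R_CompleteNormedModule)) with (fun n => Rabs (g n * s ^ n)).
  - intros n. change (norm ?x) with (Rabs x). rewrite Rabs_pos_eq.
    + rewrite Rabs_mult, (Rabs_pos_eq (s ^ n)) by (apply pow_le; lra).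
      apply Rmult_le_compat_r; [apply pow_le; lra|]. eapply Rle_trans; [apply (Hg k)|apply Rle_abs].
    + apply Rmult_le_pos; apply pow_le; [pose proof (pos_INR n)|]; lra.
  - apply CV_disk_inside. unfold g. rewrite Hr. simpl. rewrite Rabs_pos_eq; lra.
Qed.

(** * Termwise differentiation of complex power series *)

Lemma Cmod_pow_sub_le (w z : C) (rho : R) (n : nat) :
  Cmod w <= rho -> Cmod z <= rho ->
  rho * Cmod (w ^ n - z ^ n) <= INR n * rho ^ n * Cmod (w - z).
Proof.
  intros Hw Hz. induction n as [|n IHn].
  - simpl. replace (1 - 1)%C with (RtoC 0) by ring. rewrite Cmod_0. lra.
  - replace (w ^ S n - z ^ S n)%C with (w * (w ^ n - z ^ n) + z ^ n * (w - z))%C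
      by (simpl; ring).
    pose proof (Cmod_triangle (w * (w ^ n - z ^ n)) (z ^ n * (w - z))) as Htri.
    rewrite !Cmod_mult, Cmod_pow in Htri.
    set (E := Cmod (w ^ n - z ^ n)) in *. set (H := Cmod (w - z)) in *.
    assert (0 <= E) by apply Cmod_ge_0. assert (0 <= H) by apply Cmod_ge_0.
    pose proof (Cmod_ge_0 w). pose proof (pos_INR n).
    assert (Hrho : 0 <= rho) by lra.
    assert (Hzn : Cmod z ^ n <= rho ^ n) by (apply pow_incr; split; [apply Cmod_ge_0|exact Hz]).
    assert (0 <= INR n * rho ^ n * H) by (repeat apply Rmult_le_pos; try apply pow_le; lra).
    assert (Cmod w * (rho * E) <= rho * (INR n * rho ^ n * H))
      by (apply Rmult_le_compat; [lra|apply Rmult_le_pos|..]; lra).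
    assert (Cmod z ^ n * H <= rho ^ n * H) by (apply Rmult_le_compat_r; lra).
    rewrite S_INR. simpl pow. nra.
Qed.

Lemma Cmod_pow_taylor_le (w z : C) (rho : R) (n : nat) :
  Cmod w <= rho -> Cmod z <= rho ->
  rho ^ 2 * Cmod (w ^ n - z ^ n - INR n * z ^ pred n * (w - z))
  <= INR n ^ 2 * rho ^ n * Cmod (w - z) ^ 2.
Proof.
  intros Hw Hz. induction n as [|n IHn].
  - simpl. replace (1 - 1 - RtoC 0 * 1 * (w - z))%C with (RtoC 0) by ring. rewrite Cmod_0. lra.
  - replace (w ^ S n - z ^ S n - INR (S n) * z ^ pred (S n) * (w - z))%C
      with ((w - z) * (w ^ n - z ^ n) + z * (w ^ n - z ^ n - INR n * z ^ pred n * (w - z)))%C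
      by (destruct n; [simpl; ring|rewrite !S_INR, !RtoC_plus; simpl; ring]).
    pose proof (Cmod_triangle ((w - z) * (w ^ n - z ^ n))
      (z * (w ^ n - z ^ n - INR n * z ^ pred n * (w - z)))) as Htri.
    rewrite !Cmod_mult in Htri.
    pose proof (Cmod_pow_sub_le w z rho n Hw Hz) as Hsub.
    set (E := Cmod (w ^ n - z ^ n)) in *. set (H := Cmod (w - z)) in *.
    set (D := Cmod (w ^ n - z ^ n - INR n * z ^ pred n * (w - z))) in *.
    assert (0 <= E) by apply Cmod_ge_0. assert (0 <= H) by apply Cmod_ge_0.
    assert (0 <= D) by apply Cmod_ge_0. pose proof (Cmod_ge_0 z). pose proof (pos_INR n).
    assert (Hrho : 0 <= rho) by (pose proof (Cmod_ge_0 w); lra).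
    assert (0 <= rho ^ n) by (apply pow_le; lra).
    assert (A1 : rho * H * (rho * E) <= rho * H * (INR n * rho ^ n * H))
      by (apply Rmult_le_compat_l; [apply Rmult_le_pos|]; lra).
    assert (A2 : Cmod z * (rho ^ 2 * D) <= rho * (INR n ^ 2 * rho ^ n * H ^ 2))
      by (apply Rmult_le_compat; try lra; apply Rmult_le_pos; [apply pow_le|]; lra).
    assert (0 <= (INR n + 1) * (rho ^ n * H * H * rho)) by (repeat apply Rmult_le_pos; lra).
    eapply Rle_trans; [apply Rmult_le_compat_l; [apply pow_le; lra|exact Htri]|].
    rewrite S_INR. simpl pow. simpl pow in A2. nra.
Qed.

Lemma poly_bound_nonneg (c : nat -> C) (M : R) (m : nat) :
  (forall n, Cmod (c n) <= M * (INR n + 1) ^ m) -> 0 <= M.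
Proof.
  intros Hc. pose proof (Hc O) as H0. pose proof (Cmod_ge_0 (c O)).
  rewrite Rplus_0_l, pow1 in H0. lra.
Qed.

Lemma Cmod_CPS_derive_le (c : nat -> C) (M : R) (m : nat) :
  (forall n, Cmod (c n) <= M * (INR n + 1) ^ m) ->
  forall n, Cmod (CPS_derive c n) <= M * 2 ^ m * (INR n + 1) ^ S m.
Proof.
  intros Hc n. unfold CPS_derive.
  rewrite Cmod_mult, Cmod_R, Rabs_pos_eq by apply pos_INR.
  pose proof (Hc (S n)) as Hn. rewrite S_INR in *. pose proof (pos_INR n).
  pose proof (poly_bound_nonneg c M m Hc) as HM.
  assert ((INR n + 1 + 1) ^ m <= 2 ^ m * (INR n + 1) ^ m)
    by (rewrite <- Rpow_mult_distr; apply pow_incr; lra).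
  assert (0 <= M * (2 ^ m * (INR n + 1) ^ m - (INR n + 1 + 1) ^ m))
    by (apply Rmult_le_pos; lra).
  simpl pow.
  apply Rle_trans with ((INR n + 1) * (M * (INR n + 1 + 1) ^ m)); [apply Rmult_le_compat_l|]; nra.
Qed.

Lemma ex_series_Cpow_poly (c : nat -> C) (M : R) (m : nat) (z : C) :
  (forall n, Cmod (c n) <= M * (INR n + 1) ^ m) -> Cmod z < 1 ->
  ex_series (fun n => c n * z ^ n)%C.
Proof.
  intros Hc Hz.
  apply (ex_series_le (V := C_CompleteNormedModule))
    with (fun n => scal M ((INR n + 1) ^ m * Cmod z ^ n)).
  - intros n. change (Cmod (c n * z ^ n) <= M * ((INR n + 1) ^ m * Cmod z ^ n)).
    rewrite Cmod_mult, Cmod_pow, <- Rmult_assoc.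
    apply Rmult_le_compat_r; [apply pow_le, Cmod_ge_0|apply Hc].
  - apply (@ex_series_scal_l R_AbsRing R_NormedModule), ex_series_pow_geom.
    split; [apply Cmod_ge_0|exact Hz].
Qed.

Lemma is_derive_C_quadratic_error (F : C -> C) (z G : C) (M delta : R) :
  0 < delta ->
  (forall w, Cmod (w - z) < delta ->
     Cmod (F w - F z - (w - z) * G) <= M * Cmod (w - z) ^ 2) ->
  is_derive F z G.
Proof.
  intros Hd Herr. split; [apply is_linear_scal_l|].
  intros x Hx.
  assert (z = x)
    by exact (@is_filter_lim_locally_unique C_AbsRing (AbsRing_NormedModule C_AbsRing) _ _ Hx).
  subst x. intros eps.
  assert (Hd' : 0 < Rmin delta (eps / (Rabs M + 1)))
    by (pose proof (Rabs_pos M); apply Rmin_pos; [|apply Rdiv_lt_0_compat; [apply cond_pos|]]; lra).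
  exists (mkposreal _ Hd'). intros w Hw.
  change (Cmod (w - z) < Rmin delta (eps / (Rabs M + 1))) in Hw.
  change (Cmod (F w - F z - (w - z) * G) <= eps * Cmod (w - z)).
  pose proof (Rmin_l delta (eps / (Rabs M + 1))). pose proof (Rmin_r delta (eps / (Rabs M + 1))).
  pose proof (Herr w ltac:(lra)). pose proof (Cmod_ge_0 (w - z)).
  pose proof (cond_pos eps). pose proof (Rabs_pos M). pose proof (Rle_abs M).
  assert ((Rabs M + 1) * Cmod (w - z) <= eps).
  { apply Rle_trans with ((Rabs M + 1) * (eps / (Rabs M + 1))); [apply Rmult_le_compat_l; lra|].
    right. field. lra. }
  simpl pow in *. nra.
Qed.

Section TermwiseDerivative.
Variables (c : nat -> C) (M : R) (m : nat).
Hypothesis Hc : forall n, Cmod (c n) <= M * (INR n + 1) ^ m.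

Lemma is_series_CPSeries (z : C) :
  Cmod z < 1 -> is_series (fun n => c n * z ^ n)%C (CPSeries c z).
Proof. intros Hz. apply CSeries_correct, (ex_series_Cpow_poly c M m z Hc Hz). Qed.

Lemma is_series_CPSeries_derive (z : C) :
  Cmod z < 1 -> is_series (fun n => CPS_derive c n * z ^ n)%C (CPSeries (CPS_derive c) z).
Proof.
  intros Hz. apply CSeries_correct.
  exact (ex_series_Cpow_poly _ _ _ z (Cmod_CPS_derive_le c M m Hc) Hz).
Qed.

Lemma Cmod_Taylor_term_le (w z : C) (rho : R) (n : nat) :
  Cmod w <= rho -> Cmod z <= rho -> 0 < rho ->
  Cmod (c n * (w ^ n - z ^ n - INR n * z ^ pred n * (w - z)))
  <= M / rho ^ 2 * Cmod (w - z) ^ 2 * ((INR n + 1) ^ (m + 2) * rho ^ n).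
Proof.
  intros Hw Hz Hrho. rewrite Cmod_mult.
  pose proof (Cmod_pow_taylor_le w z rho n Hw Hz) as Ht.
  set (H := Cmod (w - z)) in *.
  set (D := Cmod (w ^ n - z ^ n - INR n * z ^ pred n * (w - z))) in *.
  assert (Hr2 : 0 < rho ^ 2) by (apply pow_lt; lra).
  assert (0 <= rho ^ n) by (apply pow_le; lra). pose proof (pos_INR n).
  assert (0 <= H) by apply Cmod_ge_0.
  assert (HD : D <= (INR n + 1) ^ 2 * rho ^ n * H ^ 2 / rho ^ 2).
  { apply (Rmult_le_reg_l (rho ^ 2)); [exact Hr2|].
    replace (rho ^ 2 * ((INR n + 1) ^ 2 * rho ^ n * H ^ 2 / rho ^ 2))
      with ((INR n + 1) ^ 2 * rho ^ n * H ^ 2) by (field; lra).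
    eapply Rle_trans; [exact Ht|]. apply Rmult_le_compat_r; [apply pow2_ge_0|].
    apply Rmult_le_compat_r; nra. }
  replace (M / rho ^ 2 * H ^ 2 * ((INR n + 1) ^ (m + 2) * rho ^ n))
    with (M * (INR n + 1) ^ m * ((INR n + 1) ^ 2 * rho ^ n * H ^ 2 / rho ^ 2))
    by (rewrite pow_add; field; lra).
  apply Rmult_le_compat; [apply Cmod_ge_0|apply Cmod_ge_0|apply Hc|exact HD].
Qed.

Lemma is_derive_CPSeries (z : C) :
  Cmod z < 1 -> is_derive (CPSeries c) z (CPSeries (CPS_derive c) z).
Proof.
  intros Hz. pose proof (Cmod_ge_0 z) as Hz0.
  set (rho := (1 + Cmod z) / 2). assert (Hrho : Cmod z < rho < 1) by (unfold rho; lra).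
  set (G := CPSeries (CPS_derive c) z).
  assert (HG : is_series (fun n => INR n * c n * z ^ pred n)%C G).
  { apply is_series_decr_1.
    match goal with |- is_series _ ?l => replace l with G end.
    2:{ change (G = G - RtoC (INR 0) * c 0%nat * z ^ pred 0)%C. simpl. ring. }
    exact (is_series_CPSeries_derive z Hz). }
  destruct (ex_series_pow_geom (m + 2) rho) as [S HS]; [lra|].
  apply (is_derive_C_quadratic_error _ _ _ (M / rho ^ 2 * S) (rho - Cmod z)); [lra|].
  intros w Hw.
  assert (Hw1 : Cmod w <= rho).
  { replace w with ((w - z) + z)%C by ring. eapply Rle_trans; [apply Cmod_triangle|lra]. }
  set (H := Cmod (w - z)).
  assert (Hs : is_series (fun n => c n * (w ^ n - z ^ n - INR n * z ^ pred n * (w - z)))%C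
                (CPSeries c w - CPSeries c z - (w - z) * G)%C).
  { eapply is_series_ext;
      [|exact (is_series_minus _ _ _ _ (is_series_minus _ _ _ _ (is_series_CPSeries w ltac:(lra))
              (is_series_CPSeries z Hz)) (is_series_scal_l (w - z)%C _ _ HG))].
    intros n. change ((c n * w ^ n - c n * z ^ n) - (w - z) * (INR n * c n * z ^ pred n) =
                      c n * (w ^ n - z ^ n - INR n * z ^ pred n * (w - z)))%C. ring. }
  replace (M / rho ^ 2 * S * H ^ 2) with (M / rho ^ 2 * H ^ 2 * S) by ring.
  refine (@is_series_norm_le C_AbsRing C_NormedModule _
            (fun n => M / rho ^ 2 * H ^ 2 * ((INR n + 1) ^ (m + 2) * rho ^ n)) _ _ _ Hs _).
  - intros n. exact (Cmod_Taylor_term_le w z rho n Hw1 ltac:(lra) ltac:(lra)).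
  - apply (@is_series_scal_l R_AbsRing R_NormedModule). exact HS.
Qed.

End TermwiseDerivative.

(** * The extremal function [f0] *)

Lemma PSeries_derive_eq (a : nat -> R) (F G : R -> R) (x : R) :
  CV_radius a = 1 -> (forall y, Rabs y < 1 -> PSeries a y = F y) ->
  (forall y, Rabs y < 1 -> is_derive F y (G y)) -> Rabs x < 1 ->
  PSeries (PS_derive a) x = G x.
Proof.
  intros Hr HF HG Hx.
  rewrite <- Derive_PSeries by (rewrite Hr; simpl; lra).
  rewrite (Derive_ext_loc _ F); [apply is_derive_unique; auto|].
  assert (Hd : 0 < 1 - Rabs x) by lra.
  exists (mkposreal _ Hd). intros y Hy. apply HF.
  change (Rabs (y - x) < 1 - Rabs x) in Hy.
  replace y with ((y - x) + x) by ring. eapply Rle_lt_trans; [apply Rabs_triang|lra].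
Qed.

Definition PS_sq : nat -> R := PS_derive (PS_incr_1 (PS_derive (fun _ => 1))).
Definition PS_cube : nat -> R := PS_derive PS_sq.

Lemma PS_sq_val n : PS_sq n = (INR n + 1) ^ 2.
Proof. unfold PS_sq, PS_derive, PS_incr_1. rewrite S_INR. ring. Qed.

Lemma PS_cube_val n : PS_cube n = (INR n + 1) * (INR n + 2) ^ 2.
Proof. unfold PS_cube. unfold PS_derive at 1. rewrite PS_sq_val, !S_INR. ring. Qed.

Ltac derive_rational :=
  auto_derive; [repeat apply Rmult_integral_contrapositive_currified; lra|field; lra].

Lemma is_series_pow_sq_cube (x : R) : Rabs x < 1 ->
  is_series (fun n => (INR n + 1) ^ 2 * x ^ n) ((1 + x) / (1 - x) ^ 3) /\
  is_series (fun n => (INR n + 1) * (INR n + 2) ^ 2 * x ^ n) ((4 + 2 * x) / (1 - x) ^ 4).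
Proof.
  intros Hx.
  assert (Hr0 : CV_radius (PS_incr_1 (PS_derive (fun _ => 1))) = 1)
    by (rewrite CV_radius_incr_1, CV_radius_derive; apply CV_radius_ones).
  assert (Hr1 : CV_radius PS_sq = 1) by (unfold PS_sq; rewrite CV_radius_derive; exact Hr0).
  assert (Hr2 : CV_radius PS_cube = 1) by (unfold PS_cube; rewrite CV_radius_derive; exact Hr1).
  assert (Hgeom : forall y, Rabs y < 1 -> PSeries (fun _ => 1) y = / (1 - y)).
  { intros y Hy. apply is_series_unique. apply is_series_ext with (fun n => y ^ n);
      [intros n; change (y ^ n = 1 * y ^ n); ring|apply is_series_geom; exact Hy]. }
  assert (Hneq : forall y, Rabs y < 1 -> 1 - y <> 0 /\ -1 < y < 1)
    by (intros y Hy; apply Rabs_def2 in Hy; split; lra).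
  assert (H1 : forall y, Rabs y < 1 -> PSeries (PS_derive (fun _ => 1)) y = / (1 - y) ^ 2).
  { intros y Hy. apply (PSeries_derive_eq _ (fun y => / (1 - y)) (fun y => / (1 - y) ^ 2));
      auto using CV_radius_ones.
    intros t Ht. destruct (Hneq t Ht). derive_rational. }
  assert (H2 : forall y, Rabs y < 1 -> PSeries PS_sq y = (1 + y) / (1 - y) ^ 3).
  { intros y Hy.
    apply (PSeries_derive_eq _ (fun y => y / (1 - y) ^ 2) (fun y => (1 + y) / (1 - y) ^ 3)); auto.
    - intros t Ht. rewrite PSeries_incr_1, H1 by exact Ht. reflexivity.
    - intros t Ht. destruct (Hneq t Ht). derive_rational. }
  assert (H3 : PSeries PS_cube x = (4 + 2 * x) / (1 - x) ^ 4).
  { apply (PSeries_derive_eq _ (fun y => (1 + y) / (1 - y) ^ 3)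
                              (fun y => (4 + 2 * y) / (1 - y) ^ 4)); auto.
    intros t Ht. destruct (Hneq t Ht). derive_rational. }
  split.
  - apply is_series_ext with (fun n => PS_sq n * x ^ n); [intros n; now rewrite PS_sq_val|].
    rewrite <- H2 by exact Hx. apply is_pseries_R, PSeries_correct, CV_radius_inside.
    rewrite Hr1. exact Hx.
  - apply is_series_ext with (fun n => PS_cube n * x ^ n); [intros n; now rewrite PS_cube_val|].
    rewrite <- H3. apply is_pseries_R, PSeries_correct, CV_radius_inside.
    rewrite Hr2. exact Hx.
Qed.

(* Coquelicot states equalities of sums at the carrier of an [AbelianMonoid];
   [ring] and [field] only recognize them at the concrete type [R] or [C]. *)
Ltac eq_at T := match goal with |- ?A = ?B => change (@eq T A B) end.

Lemma Cmod_sub_le (u v : C) : Cmod (u - v) <= Cmod u + Cmod v.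
Proof. rewrite <- (Cmod_opp v). apply Cmod_triangle. Qed.

Lemma Cminus_1_neq_0 (z : C) : Cmod z < 1 -> (1 - z)%C <> 0%C.
Proof.
  intros Hz E. replace z with (1 - (1 - z))%C in Hz by ring.
  rewrite E in Hz. replace (1 - 0)%C with (RtoC 1) in Hz by ring. rewrite Cmod_1 in Hz. lra.
Qed.

Lemma sum_n_INR_Cpow_sub (z : C) (N : nat) : (1 - z)%C <> 0%C ->
  @eq C (sum_n (fun k => INR k * z ^ k)%C N - z / (1 - z) ^ 2)%C
        ((INR N * z ^ S (S N) - INR (S N) * z ^ S N) / (1 - z) ^ 2)%C.
Proof.
  intros Hnz.
  assert (Hpartial : ((1 - z) ^ 2 * sum_n (fun k => INR k * z ^ k) N
                      = z - INR (S N) * z ^ S N + INR N * z ^ S (S N))%C).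
  { induction N as [|N IHN]; [rewrite sum_O; simpl; ring|].
    rewrite sum_Sn. change (plus ?a ?b) with (Cplus a b).
    rewrite Cmult_plus_distr_l, IHN, !S_INR, !RtoC_plus. simpl. ring. }
  revert Hpartial. generalize (sum_n (fun k => INR k * z ^ k)%C N). intros X HX.
  change C in X. apply (f_equal (fun y => y / (1 - z) ^ 2)%C) in HX.
  replace ((1 - z) ^ 2 * X / (1 - z) ^ 2)%C with X in HX by (field; exact Hnz).
  rewrite HX. field. exact Hnz.
Qed.

Lemma is_series_INR_Cpow (z : C) :
  Cmod z < 1 -> is_series (fun n => INR n * z ^ n)%C (z / (1 - z) ^ 2)%C.
Proof.
  intros Hz. pose proof (Cminus_1_neq_0 z Hz) as Hnz.
  assert (Hc : 0 < Cmod (1 - z)) by (apply Cmod_gt_0; exact Hnz).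
  set (c := Cmod (1 - z)) in *. set (s := Cmod z).
  assert (Hs : 0 <= s < 1) by (split; [apply Cmod_ge_0|exact Hz]).
  apply (is_series_of_sum_bound _ _ (fun N => 2 / c ^ 2 * ((INR N + 1) ^ 1 * s ^ N))).
  - intros N. change (Cmod (sum_n (fun k => INR k * z ^ k)%C N - z / (1 - z) ^ 2)
                      <= 2 / c ^ 2 * ((INR N + 1) ^ 1 * s ^ N)).
    assert (Hnz2 : ((1 - z) ^ 2)%C <> 0%C) by (apply Cpow_nz; exact Hnz).
    rewrite sum_n_INR_Cpow_sub by exact Hnz.
    rewrite Cmod_div, Cmod_pow by exact Hnz2. fold c.
    pose proof (Cmod_sub_le (INR N * z ^ S (S N)) (INR (S N) * z ^ S N)) as Htri.
    rewrite !Cmod_mult, !Cmod_R, !Cmod_pow, !Rabs_pos_eq in Htri by apply pos_INR. fold s in Htri.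
    pose proof (pos_INR N). pose proof (pow_le s N (proj1 Hs)).
    assert (Hc2 : 0 < c ^ 2) by (apply pow_lt; lra).
    apply (Rmult_le_reg_r (c ^ 2)); [exact Hc2|].
    replace (_ / c ^ 2 * c ^ 2) with (Cmod (INR N * z ^ S (S N) - INR (S N) * z ^ S N))
      by (field; lra).
    replace (2 / c ^ 2 * ((INR N + 1) ^ 1 * s ^ N) * c ^ 2) with (2 * (INR N + 1) * s ^ N)
      by (field; lra).
    eapply Rle_trans; [exact Htri|]. rewrite S_INR. simpl pow.
    assert (s * s ^ N <= s ^ N) by nra. assert (s * (s * s ^ N) <= s ^ N) by nra. nra.
  - pose proof (ex_series_lim_0 _ (ex_series_pow_geom 1 s Hs)) as Hl.
    apply (is_lim_seq_scal_l _ (2 / c ^ 2)) in Hl. simpl in Hl. rewrite Rmult_0_r in Hl.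
    exact Hl.
Qed.

Definition f0_coef (b : R) (n : nat) : R :=
  match n with 0 => 0 | 1 => 1 | 2 => -2 * b | _ => - INR n end.

Definition f0_coefC (b : R) (n : nat) : C := RtoC (f0_coef b n).

Definition df0 (b x : R) : R := 2 + 4 * (1 - b) * x - (1 + x) / (1 - x) ^ 3.
Definition d2f0 (b x : R) : R := 4 * (1 - b) - (4 + 2 * x) / (1 - x) ^ 4.

Lemma is_series_f0 (b : R) (z : C) :
  Cmod z < 1 -> is_series (fun n => f0_coef b n * z ^ n)%C (f0 b z).
Proof.
  intros Hz.
  pose proof (is_series_opp _ _ (is_series_INR_Cpow z Hz)) as H.
  eapply (is_series_eventually_ext _ _ 2) in H.
  - match type of H with is_series _ ?l => replace (f0 b z) with l; [exact H|] end.
    rewrite !sum_Sn, !sum_O. change (plus (minus ?a ?c) ?d) with (Cplus (Cminus a c) d).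
    change (plus (plus ?a ?c) ?d) with (Cplus (Cplus a c) d). change (opp ?a) with (Copp a).
    unfold f0, f0_coef. simpl INR. rewrite ?RtoC_opp, ?RtoC_mult, ?RtoC_minus.
    eq_at C. rewrite ?RtoC_plus. field. apply Cminus_1_neq_0, Hz.
  - intros [|[|[|n]]] Hn; try lia. change (opp ?a) with (Copp a). unfold f0_coef.
    rewrite RtoC_opp. eq_at C. ring.
Qed.

Lemma is_series_df0 (b x : R) : Rabs x < 1 ->
  is_series (fun n => INR (S n) * f0_coef b (S n) * x ^ n) (df0 b x).
Proof.
  intros Hx. pose proof (is_series_opp _ _ (proj1 (is_series_pow_sq_cube x Hx))) as H.
  eapply (is_series_eventually_ext _ _ 1) in H.
  - match type of H with is_series _ ?l => replace (df0 b x) with l; [exact H|] end.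
    rewrite !sum_Sn, !sum_O. repeat change (plus ?a ?c) with (a + c).
    repeat change (opp ?a) with (- a). change (minus ?a ?c) with (a - c).
    unfold df0, f0_coef. simpl. field.
    apply Rabs_def2 in Hx. lra.
  - intros [|[|n]] Hn; try lia. change (opp ?a) with (- a). unfold f0_coef.
    rewrite !S_INR. eq_at R. ring.
Qed.

Lemma is_series_d2f0 (b x : R) : Rabs x < 1 ->
  is_series (fun n => INR (S n) * (INR (S (S n)) * f0_coef b (S (S n))) * x ^ n) (d2f0 b x).
Proof.
  intros Hx. pose proof (is_series_opp _ _ (proj2 (is_series_pow_sq_cube x Hx))) as H.
  eapply (is_series_eventually_ext _ _ 0) in H.
  - match type of H with is_series _ ?l => replace (d2f0 b x) with l; [exact H|] end.
    rewrite !sum_O. change (plus ?a ?c) with (a + c).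
    repeat change (opp ?a) with (- a). change (minus ?a ?c) with (a - c).
    unfold d2f0, f0_coef. simpl. field.
    apply Rabs_def2 in Hx. lra.
  - intros [|n] Hn; try lia. change (opp ?a) with (- a). unfold f0_coef.
    rewrite !S_INR. eq_at R. ring.
Qed.

Lemma CPSeries_f0_derive (b t : R) : Rabs t < 1 ->
  CPSeries (CPS_derive (f0_coefC b)) t = RtoC (df0 b t) /\
  CPSeries (CPS_derive (CPS_derive (f0_coefC b))) t = RtoC (d2f0 b t).
Proof.
  intros Ht. split; apply is_CSeries_unique; eapply is_series_ext;
    [| apply is_series_RtoC, is_series_df0, Ht | | apply is_series_RtoC, is_series_d2f0, Ht];
    intros n; unfold CPS_derive, f0_coefC; rewrite !RtoC_mult, RtoC_pow; reflexivity.
Qed.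

(** * Coefficient estimates for the class *)

Definition Fclass_coef (b : R) (a : nat -> C) : Prop :=
  a 0%nat = 0%C /\ a 1%nat = 1%C /\ Cmod (a 2%nat) = 2 * b /\
  (forall n : nat, (3 <= n)%nat -> Cmod (a n) <= INR n).

Lemma Fclass_coef_le_f0 (b : R) (a : nat -> C) :
  Fclass_coef b a -> forall n, (2 <= n)%nat -> Cmod (a n) <= - f0_coef b n.
Proof.
  intros (_ & _ & H2 & H3) [|[|[|n]]] Hn; try lia; simpl f0_coef.
  - rewrite H2. lra.
  - rewrite Ropp_involutive. apply H3. lia.
Qed.

Lemma Fclass_coef_bound (b : R) (a : nat -> C) :
  b <= 1 -> Fclass_coef b a -> forall n, Cmod (a n) <= 2 * (INR n + 1) ^ 1.
Proof.
  intros Hb Ha n. pose proof (pos_INR n). rewrite pow_1.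
  pose proof Ha as (H0 & H1 & _).
  destruct n as [|[|n]].
  - rewrite H0, Cmod_0. lra.
  - rewrite H1, Cmod_1. simpl. lra.
  - pose proof (Fclass_coef_le_f0 b a Ha (S (S n)) ltac:(lia)).
    destruct n; simpl f0_coef in *; simpl INR in *; lra.
Qed.

Lemma Fclass_coef_f0 (b : R) : 0 <= b -> Fclass_coef b (f0_coefC b).
Proof.
  intros Hb. repeat split.
  - unfold f0_coefC. rewrite Cmod_R. simpl f0_coef. rewrite Rabs_left1; lra.
  - intros [|[|[|n]]] Hn; try lia. unfold f0_coefC. rewrite Cmod_R. unfold f0_coef.
    rewrite Rabs_Ropp, Rabs_pos_eq by apply pos_INR. lra.
Qed.

Lemma locally_unit_disc (z : C) :
  Cmod z < 1 -> @locally (AbsRing_UniformSpace C_AbsRing) z (fun w => Cmod w < 1).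
Proof.
  intros Hz. assert (Hd : 0 < 1 - Cmod z) by lra.
  exists (mkposreal _ Hd). intros w Hw. change (Cmod (w - z) < 1 - Cmod z) in Hw.
  replace w with ((w - z) + z)%C by ring. eapply Rle_lt_trans; [apply Cmod_triangle|lra].
Qed.

Lemma is_derive_CPSeries_disc (c : nat -> C) (M : R) (m : nat) (F : C -> C) (z : C) :
  (forall n, Cmod (c n) <= M * (INR n + 1) ^ m) ->
  (forall w, Cmod w < 1 -> F w = CPSeries c w) -> Cmod z < 1 ->
  is_derive F z (CPSeries (CPS_derive c) z).
Proof.
  intros Hc HF Hz. apply (is_derive_ext_loc (CPSeries c)).
  - generalize (locally_unit_disc z Hz). apply filter_imp. intros w Hw. symmetry. auto.
  - exact (is_derive_CPSeries c M m Hc z Hz).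
Qed.

Lemma InFclass_f0 (b : R) : 0 <= b <= 1 ->
  InFclass b (f0 b) (CPSeries (CPS_derive (f0_coefC b)))
                    (CPSeries (CPS_derive (CPS_derive (f0_coefC b)))).
Proof.
  intros Hb. set (a := f0_coefC b).
  pose proof (Fclass_coef_f0 b (proj1 Hb)) as Ha.
  pose proof (Fclass_coef_bound b a (proj2 Hb) Ha) as Hc.
  pose proof (Cmod_CPS_derive_le a _ _ Hc) as Hc'.
  exists a. destruct Ha as (H0 & H1 & H2 & H3).
  do 4 (split; [assumption|]). intros z Hz. split; [|split].
  - apply is_series_f0, Hz.
  - apply (is_derive_CPSeries_disc a _ _ (f0 b) _ Hc); [|exact Hz].
    intros w Hw. symmetry. apply is_CSeries_unique, is_series_f0, Hw.
  - exact (is_derive_CPSeries_disc _ _ _ _ _ Hc' (fun w _ => eq_refl) Hz).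
Qed.

Lemma InFclass_derivs (b : R) (f f1 f2 : C -> C) : b <= 1 -> InFclass b f f1 f2 ->
  exists a, Fclass_coef b a /\ forall z, Cmod z < 1 ->
    f1 z = CPSeries (CPS_derive a) z /\ f2 z = CPSeries (CPS_derive (CPS_derive a)) z.
Proof.
  intros Hb (a & H0 & H1 & H2 & H3 & Hf).
  assert (Ha : Fclass_coef b a) by (repeat split; auto).
  exists a. split; [exact Ha|].
  pose proof (Fclass_coef_bound b a Hb Ha) as Hc.
  assert (E1 : forall z, Cmod z < 1 -> f1 z = CPSeries (CPS_derive a) z).
  { intros z Hz. destruct (Hf z Hz) as (_ & Hd & _).
    rewrite <- (is_C_derive_unique f z (f1 z) Hd). apply is_C_derive_unique.
    apply (is_derive_CPSeries_disc a _ _ f _ Hc); [|exact Hz].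
    intros w Hw. symmetry. apply is_CSeries_unique, (Hf w Hw). }
  intros z Hz. split; [auto|]. destruct (Hf z Hz) as (_ & _ & Hd).
  rewrite <- (is_C_derive_unique f1 z (f2 z) Hd). apply is_C_derive_unique.
  exact (is_derive_CPSeries_disc _ _ _ _ _ (Cmod_CPS_derive_le a _ _ Hc) E1 Hz).
Qed.

Section ClassEstimates.
Variables (b r : R) (a : nat -> C) (z : C).
Hypotheses (Hb : 0 <= b <= 1) (Ha : Fclass_coef b a) (Hz : Cmod z <= r) (Hr : r < 1).

Let Hzn (n : nat) : Cmod (z ^ n) <= r ^ n.
Proof. rewrite Cmod_pow. apply pow_incr. split; [apply Cmod_ge_0|exact Hz]. Qed.

Let Hc : forall n, Cmod (a n) <= 2 * (INR n + 1) ^ 1.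
Proof. exact (Fclass_coef_bound b a (proj2 Hb) Ha). Qed.

Lemma df0_le_Cmod_CPSeries_derive : df0 b r <= Cmod (CPSeries (CPS_derive a) z).
Proof.
  pose proof (Cmod_ge_0 z).
  set (L := CPSeries (CPS_derive a) z).
  assert (HL : is_series (fun k => CPS_derive a (S k) * z ^ S k)%C (L - 1)%C).
  { apply (is_series_incr_1 (fun n => CPS_derive a n * z ^ n)%C).
    match goal with |- is_series _ ?l => replace l with L end.
    - apply (is_series_CPSeries_derive a _ _ Hc). lra.
    - unfold CPS_derive. destruct Ha as (_ & H1 & _). rewrite H1.
      change (L = L - 1 + 1 * 1 * 1)%C. ring. }
  assert (HR : is_series (fun k => - (INR (S (S k)) * f0_coef b (S (S k)) * r ^ S k))
                         (1 - df0 b r)).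
  { replace (1 - df0 b r) with (opp (df0 b r - 1))
      by (change (- (df0 b r - 1) = 1 - df0 b r); ring).
    apply (@is_series_opp R_AbsRing R_NormedModule),
      (is_series_incr_1 (fun n => INR (S n) * f0_coef b (S n) * r ^ n)).
    match goal with |- is_series _ ?l => replace l with (df0 b r) end.
    2:{ change (df0 b r = df0 b r - 1 + 1 * 1 * 1). ring. }
    apply is_series_df0. rewrite Rabs_pos_eq; lra. }
  assert (Hle : Cmod (L - 1) <= 1 - df0 b r).
  { refine (@is_series_norm_le C_AbsRing C_NormedModule _ _ _ _ _ HL HR). intros k.
    change (Cmod (INR (S (S k)) * a (S (S k)) * z ^ S k)
            <= - (INR (S (S k)) * f0_coef b (S (S k)) * r ^ S k)).
    rewrite !Cmod_mult, Cmod_R, Rabs_pos_eq by apply pos_INR.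
    pose proof (Fclass_coef_le_f0 b a Ha (S (S k)) ltac:(lia)). pose proof (pos_INR (S (S k))).
    replace (- (INR (S (S k)) * f0_coef b (S (S k)) * r ^ S k))
      with (INR (S (S k)) * - f0_coef b (S (S k)) * r ^ S k) by ring.
    apply Rmult_le_compat;
      [apply Rmult_le_pos; try apply Cmod_ge_0; lra|apply Cmod_ge_0| |apply Hzn].
    apply Rmult_le_compat_l; lra. }
  pose proof (Cmod_triangle L (1 - L)) as Htri.
  replace (L + (1 - L))%C with (RtoC 1) in Htri by ring.
  replace (1 - L)%C with (- (L - 1))%C in Htri by ring.
  rewrite Cmod_1, Cmod_opp in Htri. lra.
Qed.

Lemma Cmod_CPSeries_derive2_le : Cmod (CPSeries (CPS_derive (CPS_derive a)) z) <= - d2f0 b r.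
Proof.
  pose proof (Cmod_ge_0 z).
  apply (@is_series_norm_le C_AbsRing C_NormedModule
           (fun n => CPS_derive (CPS_derive a) n * z ^ n)%C
           (fun n => - (INR (S n) * (INR (S (S n)) * f0_coef b (S (S n))) * r ^ n))).
  - intros n. change (Cmod (INR (S n) * (INR (S (S n)) * a (S (S n))) * z ^ n)
            <= - (INR (S n) * (INR (S (S n)) * f0_coef b (S (S n))) * r ^ n)).
    rewrite !Cmod_mult, !Cmod_R, !Rabs_pos_eq by apply pos_INR.
    pose proof (Fclass_coef_le_f0 b a Ha (S (S n)) ltac:(lia)).
    pose proof (pos_INR (S n)). pose proof (pos_INR (S (S n))).
    replace (- (INR (S n) * (INR (S (S n)) * f0_coef b (S (S n))) * r ^ n))
      with (INR (S n) * (INR (S (S n)) * - f0_coef b (S (S n))) * r ^ n) by ring.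
    apply Rmult_le_compat; [repeat apply Rmult_le_pos; try apply Cmod_ge_0; lra
                           |apply Cmod_ge_0| |apply Hzn].
    apply Rmult_le_compat_l; [lra|]. apply Rmult_le_compat_l; lra.
  - apply (is_series_CPSeries_derive _ _ _ (Cmod_CPS_derive_le a _ _ Hc)). lra.
  - apply (@is_series_opp R_AbsRing R_NormedModule), is_series_d2f0. rewrite Rabs_pos_eq; lra.
Qed.

End ClassEstimates.

(** * The equation for [r0] *)

Lemma r0_eq_gap_factor (b alpha r : R) : r < 1 ->
  (1 - r) ^ 4 * ((1 - alpha) * df0 b r + r * d2f0 b r) =
  2 * (1 - alpha + 2 * (2 - alpha) * (1 - b) * r) * (1 - r) ^ 4
  - (1 - alpha + 4 * r + (1 + alpha) * r ^ 2).
Proof. intros Hr. unfold df0, d2f0. field. lra. Qed.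

Lemma d2f0_neg (b r : R) : 0 <= b <= 1 -> 0 < r < 1 -> d2f0 b r < 0.
Proof.
  intros Hb Hr. unfold d2f0.
  assert (H1 : 0 < (1 - r) ^ 4) by (apply pow_lt; lra).
  assert (H2 : (1 - r) ^ 4 <= 1) by (rewrite <- (pow1 4); apply pow_incr; lra).
  assert (4 + 2 * r <= (4 + 2 * r) / (1 - r) ^ 4).
  { apply (Rmult_le_reg_r ((1 - r) ^ 4)); [exact H1|]. field_simplify; [nra|lra]. }
  lra.
Qed.

(* The gap between the two sides of [r0_eq] decreases in [r], so it is negative past [r0]. *)
Lemma r0_eq_gap_neg (b alpha r0 t : R) : 0 <= b <= 1 -> 0 <= alpha < 1 ->
  0 < r0 -> r0 < t < 1 -> r0_eq b alpha r0 ->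
  2 * (1 - alpha + 2 * (2 - alpha) * (1 - b) * t) * (1 - t) ^ 4
  - (1 - alpha + 4 * t + (1 + alpha) * t ^ 2) < 0.
Proof.
  unfold r0_eq. intros Hb Ha Hr0 Ht E.
  set (c := 2 * (2 - alpha) * (1 - b)) in *.
  assert (Hc : 0 <= c <= 2 * (2 - alpha))
    by (unfold c; split; [apply Rmult_le_pos|]; nra).
  set (u := 1 - t) in *. set (e := t - r0).
  assert (Hu : 0 < u < 1) by (unfold u; lra). assert (He : 0 < e) by (unfold e; lra).
  replace (1 - r0) with (u + e) in E by (unfold u, e; ring).
  replace r0 with (t - e) in E by (unfold e; ring).
  assert (Hu3 : 0 <= u ^ 3 <= 1)
    by (split; [apply pow_le|rewrite <- (pow1 3); apply pow_incr]; lra).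
  assert (H4 : 4 * e * u ^ 3 <= (u + e) ^ 4 - u ^ 4).
  { replace ((u + e) ^ 4 - u ^ 4)
      with (4 * e * u ^ 3 + (6 * (u * e) ^ 2 + 4 * u * e ^ 3 + e ^ 4)) by ring.
    assert (0 <= u * e ^ 3) by (apply Rmult_le_pos; [|apply pow_le]; lra).
    pose proof (pow2_ge_0 (u * e)). pose proof (pow_le e 4 (Rlt_le _ _ He)). lra. }
  set (A := 1 - alpha + c * (t - e)).
  assert (HA : 1 - alpha <= A) by (unfold A, e; nra).
  assert ((1 - alpha) * (4 * e * u ^ 3) <= A * ((u + e) ^ 4 - u ^ 4))
    by (apply Rmult_le_compat; try lra; apply Rmult_le_pos; lra).
  assert (e * u ^ 3 * (c * u - 4 * (1 - alpha)) <= e * (2 * alpha)).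
  { assert (c * u <= c) by nra.
    destruct (Rle_dec 0 (c * u - 4 * (1 - alpha))).
    - apply Rle_trans with (e * (c * u - 4 * (1 - alpha))); [|apply Rmult_le_compat_l; lra].
      rewrite Rmult_assoc. apply Rmult_le_compat_l; [lra|]. nra.
    - assert (0 <= e * u ^ 3) by (apply Rmult_le_pos; lra). nra. }
  assert (0 <= 2 * (t - e) * e + e ^ 2) by (unfold e; nra).
  assert (0 <= (1 + alpha) * (2 * (t - e) * e + e ^ 2)) by (apply Rmult_le_pos; lra).
  assert (2 * alpha * e < 2 * e) by (apply Rmult_lt_compat_r; lra).
  replace (1 - alpha + c * t) with (A + c * e) by (unfold A; ring).
  replace (1 - alpha + 4 * t + (1 + alpha) * t ^ 2)
    with ((1 - alpha + 4 * (t - e) + (1 + alpha) * (t - e) ^ 2) + 4 * e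
          + (1 + alpha) * (2 * (t - e) * e + e ^ 2)) by ring.
  rewrite <- E. fold A. nra.
Qed.

Lemma df0_pos_near (b r0 r : R) : r0 < r -> r0 < 1 -> 0 < df0 b r0 ->
  exists t, r0 < t < r /\ t < 1 /\ 0 < df0 b t.
Proof.
  intros Hr Hr1 Hpos.
  assert (Hcont : continuous (df0 b) r0).
  { apply (@ex_derive_continuous R_AbsRing R_NormedModule). unfold df0. auto_derive.
    repeat apply Rmult_integral_contrapositive_currified; lra. }
  assert (Hloc : locally r0 (fun t => 0 < df0 b t)).
  { apply Hcont. apply (locally_open (fun u => 0 < u)); [apply open_gt|auto|exact Hpos]. }
  destruct Hloc as [eps Heps].
  set (d := Rmin (eps / 2) (Rmin ((r - r0) / 2) ((1 - r0) / 2))).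
  assert (Hd : 0 < d) by (apply Rmin_pos; [pose proof (cond_pos eps); lra|apply Rmin_pos; lra]).
  assert (d <= eps / 2 /\ d <= (r - r0) / 2 /\ d <= (1 - r0) / 2)
    by (unfold d; repeat split; eauto using Rmin_l, Rmin_r, Rle_trans).
  exists (r0 + d). repeat split; try lra. apply Heps.
  change (Rabs (r0 + d - r0) < eps). rewrite Rabs_pos_eq; pose proof (cond_pos eps); lra.
Qed.

Lemma r0_eq_root (b alpha r0 : R) : 0 <= b <= 1 -> 0 <= alpha < 1 -> 0 < r0 < 1 ->
  r0_eq b alpha r0 -> 0 < df0 b r0 /\ r0 * d2f0 b r0 = (alpha - 1) * df0 b r0.
Proof.
  intros Hb Ha Hr E. pose proof (r0_eq_gap_factor b alpha r0 ltac:(lra)) as Hf.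
  unfold r0_eq in E. rewrite E, Rminus_diag in Hf.
  assert (Hcomb : (1 - alpha) * df0 b r0 + r0 * d2f0 b r0 = 0).
  { apply Rmult_integral in Hf as [H4|]; [|exact H].
    pose proof (pow_lt (1 - r0) 4 ltac:(lra)). lra. }
  pose proof (d2f0_neg b r0 Hb Hr).
  assert (0 < r0 * - d2f0 b r0) by (apply Rmult_lt_0_compat; lra).
  split; [|lra]. apply (Rmult_lt_reg_l (1 - alpha)); lra.
Qed.

(** * The radii *)

Lemma InFclass_ratio_le (b alpha r0 : R) (f f1 f2 : C -> C) (z : C) :
  0 <= b <= 1 -> 0 <= alpha < 1 -> 0 < r0 < 1 -> r0_eq b alpha r0 ->
  InFclass b f f1 f2 -> Cmod z <= r0 ->
  f1 z <> 0%C /\ r0 * Cmod (z * f2 z / f1 z) <= (1 - alpha) * Cmod z.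
Proof.
  intros Hb Ha Hr E Hf Hz.
  destruct (r0_eq_root b alpha r0 Hb Ha Hr E) as [Hpos Hroot].
  destruct (InFclass_derivs b f f1 f2 (proj2 Hb) Hf) as (a & Hc & Hrep).
  destruct (Hrep z ltac:(lra)) as [-> ->].
  pose proof (df0_le_Cmod_CPSeries_derive b r0 a z Hb Hc Hz (proj2 Hr)) as H1.
  pose proof (Cmod_CPSeries_derive2_le b r0 a z Hb Hc Hz (proj2 Hr)) as H2.
  set (D1 := CPSeries (CPS_derive a) z) in *.
  set (D2 := CPSeries (CPS_derive (CPS_derive a)) z) in *.
  assert (Hnz : D1 <> 0%C) by (intros Z; rewrite Z, Cmod_0 in H1; lra).
  split; [exact Hnz|].
  rewrite Cmod_div, Cmod_mult by exact Hnz.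
  pose proof (Cmod_ge_0 z). pose proof (Cmod_ge_0 D2).
  apply (Rmult_le_reg_r (Cmod D1)); [lra|].
  replace (r0 * (Cmod z * Cmod D2 / Cmod D1) * Cmod D1) with (Cmod z * (r0 * Cmod D2))
    by (field; lra).
  apply Rle_trans with (Cmod z * (r0 * - d2f0 b r0));
    [apply Rmult_le_compat_l; [|apply Rmult_le_compat_l]; lra|].
  rewrite Ropp_mult_distr_r_reverse, Hroot.
  replace (Cmod z * - ((alpha - 1) * df0 b r0)) with ((1 - alpha) * Cmod z * df0 b r0) by ring.
  apply Rmult_le_compat_l; [apply Rmult_le_pos|]; lra.
Qed.

Lemma f0_ratio_beyond_r0 (b alpha r0 r : R) :
  0 <= b <= 1 -> 0 <= alpha < 1 -> 0 < r0 < 1 -> r0_eq b alpha r0 -> r0 < r ->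
  exists t w, 0 < t < r /\ t < 1 /\ w < alpha - 1 /\
    (RtoC t * CPSeries (CPS_derive (CPS_derive (f0_coefC b))) t
            / CPSeries (CPS_derive (f0_coefC b)) t)%C = RtoC w.
Proof.
  intros Hb Ha Hr0 E Hr.
  destruct (r0_eq_root b alpha r0 Hb Ha Hr0 E) as [Hpos _].
  destruct (df0_pos_near b r0 r Hr (proj2 Hr0) Hpos) as (t & Ht & Ht1 & Hdt).
  exists t, (t * d2f0 b t / df0 b t).
  destruct (CPSeries_f0_derive b t ltac:(rewrite Rabs_pos_eq; lra)) as [-> ->].
  repeat split; try lra.
  - pose proof (r0_eq_gap_neg b alpha r0 t Hb Ha (proj1 Hr0) (conj (proj1 Ht) Ht1) E) as Hg.
    rewrite <- r0_eq_gap_factor in Hg by lra.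
    assert (Hc : (1 - alpha) * df0 b t + t * d2f0 b t < 0).
    { apply Rnot_le_lt. intros Hn. pose proof (pow_lt (1 - t) 4 ltac:(lra)).
      assert (0 <= (1 - t) ^ 4 * ((1 - alpha) * df0 b t + t * d2f0 b t))
        by (apply Rmult_le_pos; lra). lra. }
    apply (Rmult_lt_reg_r (df0 b t)); [exact Hdt|].
    replace (t * d2f0 b t / df0 b t * df0 b t) with (t * d2f0 b t) by (field; lra). lra.
  - rewrite <- RtoC_mult, <- RtoC_div by lra. reflexivity.
Qed.

Lemma Re_1_plus_ge (w : C) : 1 - Cmod w <= Re (1 + w)%C.
Proof.
  change (1 - Cmod w <= 1 + Re w).
  pose proof (re_le_Cmod w). pose proof (Rle_abs (- Re w)). rewrite Rabs_Ropp in *. lra.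
Qed.

(* [convex_order_radii] and [unif_convex_radii] are both of this shape, with [P] the
   condition imposed on [z f''(z) / f'(z)]. *)
Definition Fclass_radii (b : R) (P : C -> Prop) (r : R) : Prop :=
  0 < r <= 1 /\ forall f f1 f2, InFclass b f f1 f2 -> forall z : C, Cmod z < r ->
    f1 z <> 0%C /\ P (z * f2 z / f1 z)%C.

Lemma is_lub_Fclass_radii (b alpha r0 : R) (P : C -> Prop) :
  0 <= b <= 1 -> 0 <= alpha < 1 -> 0 < r0 < 1 -> r0_eq b alpha r0 ->
  (forall w, Cmod w < 1 - alpha -> P w) -> (forall w : R, w < alpha - 1 -> ~ P w) ->
  is_lub (Fclass_radii b P) r0.
Proof.
  intros Hb Ha Hr0 E Hin Hout. split.
  - intros r [[Hr Hr1] Hall]. apply Rnot_lt_le. intros Hlt.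
    destruct (f0_ratio_beyond_r0 b alpha r0 r Hb Ha Hr0 E Hlt) as (t & w & Ht & Ht1 & Hw & Hrat).
    destruct (Hall _ _ _ (InFclass_f0 b Hb) (RtoC t)) as [_ HP].
    + rewrite Cmod_R, Rabs_pos_eq; lra.
    + rewrite Hrat in HP. exact (Hout w Hw HP).
  - intros ub Hub. apply Hub. split; [lra|]. intros f f1 f2 Hf z Hz.
    destruct (InFclass_ratio_le b alpha r0 f f1 f2 z Hb Ha Hr0 E Hf (Rlt_le _ _ Hz))
      as [Hnz Hle].
    split; [exact Hnz|]. apply Hin. apply (Rmult_lt_reg_l r0); [lra|].
    eapply Rle_lt_trans; [exact Hle|]. rewrite Rmult_comm. apply Rmult_lt_compat_r; lra.
Qed.

Lemma f0_ratio_at_r0 (b alpha r0 : R) :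
  0 <= b <= 1 -> 0 <= alpha < 1 -> 0 < r0 < 1 -> r0_eq b alpha r0 ->
  (RtoC r0 * CPSeries (CPS_derive (CPS_derive (f0_coefC b))) r0
           / CPSeries (CPS_derive (f0_coefC b)) r0)%C = RtoC (alpha - 1).
Proof.
  intros Hb Ha Hr0 E. destruct (r0_eq_root b alpha r0 Hb Ha Hr0 E) as [Hpos Hroot].
  destruct (CPSeries_f0_derive b r0 ltac:(rewrite Rabs_pos_eq; lra)) as [-> ->].
  rewrite <- RtoC_mult, <- RtoC_div by lra. f_equal. rewrite Hroot. field. lra.
Qed.

Theorem theorem3p1 (b alpha r0 r1 : R) :
  0 <= b <= 1 -> 0 <= alpha < 1 ->
  0 < r0 < 1 -> r0_eq b alpha r0 ->
  0 < r1 < 1 -> r0_eq b (1 / 2) r1 ->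
  (* (i) *)
  (forall f f1 f2, InFclass b f f1 f2 -> forall z : C, Cmod z <= r0 ->
     Cmod (z * f2 z / f1 z)%C <= 1 - alpha) /\
  (* (ii) *)
  is_radius_convexity_order alpha (InFclass b) r0 /\
  (* (iii) *)
  is_radius_unif_convexity (InFclass b) r1 /\
  (* sharpness *)
  (exists f1 f2 : C -> C,
     InFclass b (f0 b) f1 f2 /\
     Cmod (RtoC r0 * f2 (RtoC r0) / f1 (RtoC r0))%C = 1 - alpha /\
     Re (RtoC r0 * f2 (RtoC r0) / f1 (RtoC r0))%C = alpha - 1).
Proof.
  intros Hb Ha Hr0 E0 Hr1 E1. split; [|split; [|split]].
  - intros f f1 f2 Hf z Hz.
    destruct (InFclass_ratio_le b alpha r0 f f1 f2 z Hb Ha Hr0 E0 Hf Hz) as [_ Hle].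
    apply (Rmult_le_reg_l r0); [lra|]. eapply Rle_trans; [exact Hle|].
    rewrite Rmult_comm. apply Rmult_le_compat_r; lra.
  - apply (is_lub_Fclass_radii b alpha r0 (fun w => Re (1 + w)%C > alpha) Hb Ha Hr0 E0).
    + intros w Hw. pose proof (Re_1_plus_ge w). lra.
    + intros w Hw. change (~ 1 + w > alpha). lra.
  - apply (is_lub_Fclass_radii b (1 / 2) r1 (fun w => Re (1 + w)%C > Cmod w) Hb
             ltac:(lra) Hr1 E1).
    + intros w Hw. pose proof (Re_1_plus_ge w). lra.
    + intros w Hw. change (~ 1 + w > Cmod w). rewrite Cmod_R, Rabs_left; lra.
  - exists (CPSeries (CPS_derive (f0_coefC b))), (CPSeries (CPS_derive (CPS_derive (f0_coefC b)))).
    rewrite (f0_ratio_at_r0 b alpha r0 Hb Ha Hr0 E0), Cmod_R, Rabs_left by lra.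
    split; [exact (InFclass_f0 b Hb)|split; [ring|reflexivity]].
Qed.
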